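(* Assume the setting in the context with Assumptions (A1), (A2), (A3). Let $0<\tau_2<1/\zeta$ (any $\tau_2>0$ if $\zeta=0$). For $y_t\in Y$ and $z_t\in\mathcal X$, let $y^+(z_t)=\mathrm{prox}_{\tau_2h}\big(y_t+\tau_2\nabla_y\tilde f(x^*(y_t,z_t),y_t)\big)$. Then $\|x^*(y^+(z_t),z_t)-x^*(z_t)\|^2\le\frac{3}{\mu(p-l)\tau_2^2}\big(1+\tau_2^2l^2+\gamma_2^2\tau_2^2l^2\big)\|y^+(z_t)-y_t\|^2$, where $\gamma_2=\frac{p+l}{p-l}$.
   Context: $\mathcal X=\mathbb R^{d_1\times r}$ (Frobenius norm), $\mathcal Y=\mathbb R^{d_2}$, $\mathcal M=\{x:x^\top x=I_r\}$, $c(x)=x^\top x-I_r$, $A(x)=x(\frac32I_r-\frac12x^\top x)$; $C>\frac12+\sup_{x\in\mathcal M}\|x\|$, $X=\{x:\|x\|\le C\}$, $\bar X=\{A(x):\|x\|\le C\}$. $\partial$ is the Fréchet subdifferential; $\mathrm{prox}_{\tau h}(v)=\arg\min_y\{\tau h(y)+\frac12\|y-v\|^2\}$. (A1) $h:\mathcal Y\to\mathbb R\cup\{+\infty\}$ proper, closed, $\zeta$-weakly convex ($h+\frac\zeta2\|\cdot\|^2$ convex), closed domain $Y$, locally Lipschitz on $Y$, $Y$ bounded. (A2) $f$ differentiable on an open set containing $\bar X\times Y$ with $\|\nabla_xf(x_1,y_1)-\nabla_xf(x_2,y_2)\|\le L_{xx}\|x_1-x_2\|+L_{xy}\|y_1-y_2\|$,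 $\|\nabla_yf(x_1,y_1)-\nabla_yf(x_2,y_2)\|\le L_{yx}\|x_1-x_2\|+L_{yy}\|y_1-y_2\|$ on $\bar X\times Y$. (A3) With $f_r=f-h$, there is $\mu>0$ with $\max_wf_r(x,w)-f_r(x,y)\le\frac1{2\mu}\mathrm{dist}^2(0,-\nabla_yf(x,y)+\partial h(y))$ for all $x\in\bar X,y\in Y$. For $\rho>0$: $\tilde f(x,y)=f(A(x),y)+\frac\rho4\|c(x)\|^2$, $\tilde f_r=\tilde f-h$; $l$ is the (blockwise) Lipschitz constant of $\nabla\tilde f$ on $X\times Y$; standing choice $p>l$. $\hat f(x,y;z)=\tilde f(x,y)+\frac p2\|x-z\|^2$, $\hat f_r=\hat f-h$, $\Phi(x;z)=\max_{y\in\mathcal Y}\hat f_r(x,y;z)$, $x^*(y,z)=\arg\min_{x\in X}\hat f(x,y;z)$, $x^*(z)=\arg\min_{x\in X}\Phi(x;z)$. *)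

From HB Require Import structures.
From mathcomp Require Import all_boot all_order all_algebra.
From mathcomp Require Import classical_sets reals.
Set Implicit Arguments. Unset Strict Implicit. Unset Printing Implicit Defensive.
Import Order.TTheory GRing.Theory Num.Theory.
Local Open Scope ring_scope.
Local Open Scope classical_set_scope.

Section Defs.
Variable R : realType.

Definition mdot {m n} (A B : 'M[R]_(m, n)) : R :=
  \sum_(i < m) \sum_(j < n) A i j * B i j.
Definition fsq {m n} (A : 'M[R]_(m, n)) : R := mdot A A.
Definition fnorm {m n} (A : 'M[R]_(m, n)) : R := Num.sqrt (fsq A).

Variables d1 r d2 : nat.
Notation MX := 'M[R]_(d1, r).
Notation VY := 'rV[R]_d2.

Definition stiefel (x : MX) : Prop := x^T *m x = 1%:M.
Definition cmap (x : MX) : 'M[R]_r := x^T *m x - 1%:M.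
Definition Amap (x : MX) : MX := x *m ((3/2)%:M - (1/2) *: (x^T *m x)).

Definition Xball (C : R) : set MX := [set x | fnorm x <= C].
Definition Xbar (C : R) : set MX := [set Amap x | x in Xball C].

Definition is_grad2 (F : MX -> VY -> R) (x : MX) (y : VY) (gx : MX) (gy : VY)
  : Prop :=
  forall eps, 0 < eps -> exists2 delta, 0 < delta &
    forall hx hy, fnorm hx < delta -> fnorm hy < delta ->
      `|F (x + hx) (y + hy) - F x y - mdot gx hx - mdot gy hy|
        <= eps * (fnorm hx + fnorm hy).

Definition open2 (U : set (MX * VY)) : Prop :=
  forall x y, U (x, y) -> exists2 delta, 0 < delta &
    forall x' y', fnorm (x' - x) < delta -> fnorm (y' - y) < delta -> U (x', y').

(* h : Y -> R u {+oo} is represented by its finite part h on its domain Ydom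
   (h = +oo outside Ydom). *)
Definition closed_set (D : set VY) : Prop :=
  forall y, (forall eps, 0 < eps -> exists2 y', D y' & fnorm (y - y') < eps) -> D y.

Definition assumption_A1 (h : VY -> R) (Ydom : set VY) (zeta : R) : Prop :=
  [/\ (exists y, Ydom y) /\
      closed_set Ydom,
      (forall y, Ydom y -> forall eps, 0 < eps -> exists2 delta, 0 < delta &
          forall y', Ydom y' -> fnorm (y' - y) < delta -> h y - eps < h y'),
      0 <= zeta /\
      (forall y1 y2 t, Ydom y1 -> Ydom y2 -> 0 <= t <= 1 ->
         Ydom (t *: y1 + (1 - t) *: y2) /\
         h (t *: y1 + (1 - t) *: y2) + zeta / 2 * fsq (t *: y1 + (1 - t) *: y2)
           <= t * (h y1 + zeta / 2 * fsq y1) + (1 - t) * (h y2 + zeta / 2 * fsq y2)),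
      (forall y, Ydom y -> exists delta, exists L, 0 < delta /\
         forall y1 y2, Ydom y1 -> Ydom y2 -> fnorm (y1 - y) < delta ->
           fnorm (y2 - y) < delta -> `|h y1 - h y2| <= L * fnorm (y1 - y2)) &
      (exists B, forall y, Ydom y -> fnorm y <= B)].

Definition assumption_A2 (f : MX -> VY -> R) (fx : MX -> VY -> MX)
  (fy : MX -> VY -> VY) (U : set (MX * VY)) (Ydom : set VY) (C : R)
  (Lxx Lxy Lyx Lyy : R) : Prop :=
  [/\ open2 U,
      (forall x y, Xbar C x -> Ydom y -> U (x, y)),
      (forall x y, U (x, y) -> is_grad2 f x y (fx x y) (fy x y)),
      (forall x1 y1 x2 y2, Xbar C x1 -> Ydom y1 -> Xbar C x2 -> Ydom y2 ->
         fnorm (fx x1 y1 - fx x2 y2) <= Lxx * fnorm (x1 - x2) + Lxy * fnorm (y1 - y2)) &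
      (forall x1 y1 x2 y2, Xbar C x1 -> Ydom y1 -> Xbar C x2 -> Ydom y2 ->
         fnorm (fy x1 y1 - fy x2 y2) <= Lyx * fnorm (x1 - x2) + Lyy * fnorm (y1 - y2))].

Definition frechet_subgrad (h : VY -> R) (Ydom : set VY) (y v : VY) : Prop :=
  Ydom y /\ forall eps, 0 < eps -> exists2 delta, 0 < delta &
    forall y', Ydom y' -> fnorm (y' - y) < delta ->
      h y + mdot v (y' - y) - eps * fnorm (y' - y) <= h y'.

(* (A3): max_w f_r(x,w) - f_r(x,y) <= 1/(2mu) dist^2(0, -grad_y f(x,y) + dh(y));
   stated for every w in dom h and every v in dh(y) (sup/inf unfolded). *)
Definition assumption_A3 (f : MX -> VY -> R) (fy : MX -> VY -> VY)
  (h : VY -> R) (Ydom : set VY) (C mu : R) : Prop :=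
  0 < mu /\
  forall x y w v, Xbar C x -> Ydom y -> Ydom w -> frechet_subgrad h Ydom y v ->
    (f x w - h w) - (f x y - h y) <= 1 / (2 * mu) * fsq (- fy x y + v).

Definition ftilde (f : MX -> VY -> R) (rho : R) (x : MX) (y : VY) : R :=
  f (Amap x) y + rho / 4 * fsq (cmap x).

Definition fhat (f : MX -> VY -> R) (rho p : R) (x : MX) (y : VY) (z : MX) : R :=
  ftilde f rho x y + p / 2 * fsq (x - z).

Definition Phi (f : MX -> VY -> R) (h : VY -> R) (Ydom : set VY) (rho p : R)
  (x z : MX) : R :=
  sup [set fhat f rho p x y z - h y | y in Ydom].

Definition is_argmin {T : Type} (S : set T) (g : T -> R) (a : T) : Prop :=
  S a /\ forall b, S b -> g a <= g b.

Definition is_prox (h : VY -> R) (Ydom : set VY) (tau : R) (v yp : VY) : Prop :=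
  is_argmin Ydom (fun y => tau * h y + 1 / 2 * fsq (y - v)) yp.

End Defs.

(* Write x1 = x*(y+, z), x2 = x*(z) and
   v = (y_t - y+) / tau2 + grad_y ftilde(x*(y_t, z), y_t), a Frechet subgradient of h at
   y+ by optimality of the prox step.  As grad ftilde is l-Lipschitz, fhat(., y+; z)
   grows with modulus p - l away from its minimiser x1 over X (first-order condition,
   then monotonicity along segments).  Phi(.; z) lies above fhat(., y+; z) - h(y+) and,
   by (A3), below it up to |v - grad_y f(A x, y+)|^2 / (2 mu); comparing at x1 and x2
   gives mu (p - l) |x1 - x2|^2 <= |v - grad_y ftilde(x1, y+)|^2, since the penalty
   term of ftilde does not depend on y.  The first-order conditions at x*(y_t, z) and x1
   make y |-> x*(y, z) (l / (p - l))-Lipschitz, so this residual is at most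
   (1 / tau2 + l + gamma2 l) |y+ - y_t|; finally (a + b + c)^2 <= 3 (a^2 + b^2 + c^2). *)

From HB Require Import structures.
From mathcomp Require Import all_boot all_order all_algebra.
From mathcomp Require Import classical_sets reals.
From mathcomp Require Import ring lra.
Import Order.TTheory GRing.Theory Num.Theory.
Set Implicit Arguments. Unset Strict Implicit. Unset Printing Implicit Defensive.
Local Open Scope ring_scope.
Local Open Scope classical_set_scope.

Lemma sqrD3_le (R : realFieldType) (a b c : R) :
  (a + b + c) ^+ 2 <= 3 * (a ^+ 2 + b ^+ 2 + c ^+ 2).
Proof.
have := sqr_ge0 (a - b); have := sqr_ge0 (b - c); have := sqr_ge0 (a - c); nra.
Qed.

Section Frobenius.
Variables (R : realType) (m n : nat).
Implicit Types A B C : 'M[R]_(m, n).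

Lemma mdotC A B : mdot A B = mdot B A.
Proof. by apply: eq_bigr => i _; apply: eq_bigr => j _; rewrite mulrC. Qed.

Lemma mdotDl A B C : mdot (A + B) C = mdot A C + mdot B C.
Proof.
rewrite /mdot -big_split; apply: eq_bigr => i _; rewrite -big_split.
by apply: eq_bigr => j _; rewrite mxE mulrDl.
Qed.

Lemma mdotZl a A B : mdot (a *: A) B = a * mdot A B.
Proof.
rewrite /mdot mulr_sumr; apply: eq_bigr => i _; rewrite mulr_sumr.
by apply: eq_bigr => j _; rewrite mxE mulrA.
Qed.

Lemma mdotNl A B : mdot (- A) B = - mdot A B.
Proof. by rewrite -scaleN1r mdotZl mulN1r. Qed.

Lemma mdotBl A B C : mdot (A - B) C = mdot A C - mdot B C.
Proof. by rewrite mdotDl mdotNl. Qed.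

Lemma mdotDr A B C : mdot C (A + B) = mdot C A + mdot C B.
Proof. by rewrite mdotC mdotDl !(mdotC C). Qed.

Lemma mdotZr a A B : mdot B (a *: A) = a * mdot B A.
Proof. by rewrite mdotC mdotZl mdotC. Qed.

Lemma mdotNr A B : mdot B (- A) = - mdot B A.
Proof. by rewrite mdotC mdotNl mdotC. Qed.

Lemma mdot0r A : mdot A 0 = 0.
Proof. by rewrite -(scale0r (0 : 'M[R]_(m, n))) mdotZr mul0r. Qed.

Lemma fsq_ge0 A : 0 <= fsq A.
Proof. by apply: sumr_ge0 => i _; apply: sumr_ge0 => j _; rewrite -expr2 sqr_ge0. Qed.

Lemma fsq_eq0 A : fsq A = 0 -> A = 0.
Proof.
have sqr_sum_ge0 (i : 'I_m) : 0 <= \sum_(j < n) A i j * A i j.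
  by apply: sumr_ge0 => j _; rewrite -expr2 sqr_ge0.
rewrite /fsq /mdot => /eqP; rewrite psumr_eq0 // => /allP rows0.
apply/matrixP => i j; have /= := rows0 i (mem_index_enum _).
rewrite psumr_eq0 => [/allP row0|k _]; last by rewrite -expr2 sqr_ge0.
by have /= := row0 j (mem_index_enum _); rewrite mulf_eq0 orbb mxE => /eqP.
Qed.

Lemma fnorm_ge0 A : 0 <= fnorm A.
Proof. exact: sqrtr_ge0. Qed.

Lemma fsq_fnorm A : fsq A = fnorm A * fnorm A.
Proof. by rewrite -expr2 sqr_sqrtr // fsq_ge0. Qed.

Lemma fnorm0 : fnorm (0 : 'M[R]_(m, n)) = 0.
Proof. by rewrite /fnorm /fsq mdot0r sqrtr0. Qed.

Lemma fsqZ a A : fsq (a *: A) = a ^+ 2 * fsq A.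
Proof. by rewrite /fsq mdotZl mdotZr mulrA expr2. Qed.

Lemma fnormZ a A : fnorm (a *: A) = `|a| * fnorm A.
Proof. by rewrite /fnorm fsqZ sqrtrM ?sqr_ge0 // sqrtr_sqr. Qed.

Lemma fsqN A : fsq (- A) = fsq A.
Proof. by rewrite /fsq mdotNl mdotNr opprK. Qed.

Lemma fsq_distC A B : fsq (A - B) = fsq (B - A).
Proof. by rewrite -fsqN opprB. Qed.

Lemma fnorm_distC A B : fnorm (A - B) = fnorm (B - A).
Proof. by rewrite /fnorm fsq_distC. Qed.

Lemma fsqD A B : fsq (A + B) = fsq A + 2 * mdot A B + fsq B.
Proof. rewrite /fsq mdotDl !mdotDr (mdotC B A); ring. Qed.

Lemma mdot_le_fnorm A B : mdot A B <= fnorm A * fnorm B.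
Proof.
set a := fnorm A; set b := fnorm B.
have [a0 | a_neq0] := eqVneq a 0.
  have -> : A = 0 by apply: fsq_eq0; rewrite fsq_fnorm -/a a0 mul0r.
  by rewrite a0 mdotC mdot0r mul0r.
have [b0 | b_neq0] := eqVneq b 0.
  have -> : B = 0 by apply: fsq_eq0; rewrite fsq_fnorm -/b b0 mul0r.
  by rewrite b0 mdot0r mulr0.
have ab_gt0 : 0 < a * b by rewrite mulr_gt0 // lt_def ?a_neq0 ?b_neq0 fnorm_ge0.
(* 0 <= |b A - a B|^2 = 2 a b (a b - <A, B>) *)
have := fsq_ge0 (b *: A - a *: B).
rewrite fsqD fsqN !fsqZ mdotNr mdotZl mdotZr !fsq_fnorm -/a -/b.
move: (mdot A B) => u; nra.
Qed.

Lemma mdot_le_bound c A B : fnorm A <= c -> mdot A B <= c * fnorm B.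
Proof.
by move=> A_le; apply: le_trans (mdot_le_fnorm A B) _; rewrite ler_wpM2r ?fnorm_ge0.
Qed.

Lemma ler_fnormD A B : fnorm (A + B) <= fnorm A + fnorm B.
Proof.
have sum_ge0 : 0 <= fnorm A + fnorm B by rewrite addr_ge0 ?fnorm_ge0.
rewrite -(ger0_norm sum_ge0) -sqrtr_sqr ler_sqrt ?sqr_ge0 //.
rewrite fsqD !fsq_fnorm; have := mdot_le_fnorm A B; nra.
Qed.

Lemma Xball_segment (c : R) A B t : Xball c A -> Xball c B -> 0 <= t <= 1 ->
  Xball c (A + t *: (B - A)).
Proof.
rewrite /Xball /= => A_in B_in /andP[t_ge0 t_le1].
have -> : A + t *: (B - A) = (1 - t) *: A + t *: B.
  by rewrite scalerBr scalerBl scale1r addrA addrAC.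
apply: le_trans (ler_fnormD _ _) _.
rewrite !fnormZ (ger0_norm t_ge0) ger0_norm ?subr_ge0 //.
have := fnorm_ge0 A; have := fnorm_ge0 B; nra.
Qed.

End Frobenius.

Section OneVariable.
Variable R : realType.
Implicit Types (phi psi D : R -> R).

Definition has_derive01 phi (t d : R) := forall e, 0 < e -> exists2 delta, 0 < delta &
  forall s, 0 <= s <= 1 -> `|s - t| < delta ->
    `|phi s - phi t - d * (s - t)| <= e * `|s - t|.

Lemma eq_has_derive01 phi psi t d : (forall s, phi s = psi s) ->
  has_derive01 phi t d -> has_derive01 psi t d.
Proof.
move=> phi_psi phi_d e /phi_d[delta delta_gt0 near_t]; exists delta => // s s01.
by rewrite -!phi_psi; exact: near_t.
Qed.

Lemma has_derive01D phi psi t a b : has_derive01 phi t a -> has_derive01 psi t b ->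
  has_derive01 (fun s => phi s + psi s) t (a + b).
Proof.
move=> phi_a psi_b e e_gt0.
have [d1 d1_gt0 near1] := phi_a (e / 2) ltac:(lra).
have [d2 d2_gt0 near2] := psi_b (e / 2) ltac:(lra).
exists (Num.min d1 d2) => [|s s01]; first by rewrite lt_min d1_gt0.
rewrite lt_min => /andP[/(near1 s s01) phi_s /(near2 s s01) psi_s].
have -> : phi s + psi s - (phi t + psi t) - (a + b) * (s - t)
    = (phi s - phi t - a * (s - t)) + (psi s - psi t - b * (s - t)) by ring.
by apply: le_trans (ler_normD _ _) _; lra.
Qed.

Lemma has_derive01_quadratic a b c t :
  has_derive01 (fun s => a + b * s + c * s ^+ 2) t (b + 2 * c * t).
Proof.
move=> e e_gt0; have c1_gt0 : 0 < `|c| + 1 by have := normr_ge0 c; lra.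
exists (e / (`|c| + 1)) => [|s _]; first exact: divr_gt0.
rewrite ltr_pdivlMr // => st_small.
have -> : a + b * s + c * s ^+ 2 - (a + b * t + c * t ^+ 2) - (b + 2 * c * t) * (s - t)
    = c * (s - t) * (s - t) by ring.
rewrite !normrM; have := normr_ge0 c; have := normr_ge0 (s - t); nra.
Qed.

Lemma has_derive01_ge0_at_min phi d : has_derive01 phi 0 d ->
  (forall t, 0 <= t <= 1 -> phi 0 <= phi t) -> 0 <= d.
Proof.
move=> phi_d phi0_min; rewrite leNgt; apply/negP => d_lt0.
have [delta delta_gt0 near0] := phi_d (- d / 2) ltac:(lra).
pose t := Num.min 1 (delta / 2).
have t_gt0 : 0 < t by rewrite lt_min; apply/andP; split; lra.
have t01 : 0 <= t <= 1 by rewrite ge_min lexx ltW.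
have t_small : t <= delta / 2 by rewrite ge_min lexx orbT.
have := near0 t t01; rewrite subr0 (gtr0_norm t_gt0) => /(_ ltac:(lra)).
rewrite ler_norml => /andP[_]; have := phi0_min t t01; nra.
Qed.

(* The sup of the points t with phi t >= phi 0 - e t is such a point (approach
   from the left), and it is 1 since otherwise [D >= 0] pushes it to the right. *)
Lemma has_derive01_ge0_slack phi D e :
  (forall t, 0 <= t <= 1 -> has_derive01 phi t (D t)) ->
  (forall t, 0 <= t <= 1 -> 0 <= D t) -> 0 < e -> phi 0 - e <= phi 1.
Proof.
move=> phi_d D_ge0 e_gt0.
pose S := [set t : R | 0 <= t <= 1 /\ phi 0 - e * t <= phi t].
have S0 : S 0 by rewrite /S /= lexx ler01 mulr0 subr0.
have S_sup : has_sup S by split; [exists 0 | exists 1 => t [/andP[]]].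
set s := sup S.
have s01 : 0 <= s <= 1.
  by rewrite (sup_upper_bound S_sup S0) ge_sup //; [exists 0 | move=> t [/andP[]]].
have [delta delta_gt0 near_s] := phi_d s s01 e e_gt0.
have Ds_ge0 := D_ge0 s s01.
have Ss : S s.
  have [t [t01 St]] := sup_adherent delta_gt0 S_sup; rewrite -/s => s_near_t.
  have t_le_s : t <= s by exact: sup_upper_bound.
  have := near_s t t01; rewrite ler0_norm ?subr_le0 //.
  move=> /(_ ltac:(lra)); rewrite ler_norml => /andP[_].
  have : 0 <= D s * (s - t) by rewrite mulr_ge0 // subr_ge0.
  by split => //; lra.
suff s1 : s = 1 by case: Ss; rewrite s1 mulr1.
apply/eqP; rewrite eq_le (andP s01).2 /= leNgt; apply/negP => s_lt1.
pose q := Num.min (1 - s) (delta / 2).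
have q_gt0 : 0 < q by rewrite lt_min; apply/andP; split; lra.
have q_le : q <= 1 - s /\ q <= delta / 2 by rewrite !ge_min !lexx orbT.
have sq01 : 0 <= s + q <= 1 by apply/andP; split; lra.
have Ssq : S (s + q).
  have := near_s (s + q) sq01; rewrite addrAC subrr add0r gtr0_norm //.
  move=> /(_ ltac:(lra)); rewrite ler_norml => /andP[lower _].
  have : 0 <= D s * q by rewrite mulr_ge0 // ltW.
  by case: Ss => _ phi_s; split => //; lra.
by have := sup_upper_bound S_sup Ssq; rewrite -/s; lra.
Qed.

Lemma ger0_has_derive01_le phi D :
  (forall t, 0 <= t <= 1 -> has_derive01 phi t (D t)) ->
  (forall t, 0 <= t <= 1 -> 0 <= D t) -> phi 0 <= phi 1.
Proof.
move=> phi_d D_ge0; rewrite leNgt; apply/negP => phi10.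
by have := has_derive01_ge0_slack (e := (phi 0 - phi 1) / 2) phi_d D_ge0; lra.
Qed.

End OneVariable.

Section ProximalArgmin.
Context {R : realType} {d1 r d2 : nat}.
Notation MX := 'M[R]_(d1, r).
Notation VY := 'rV[R]_d2.
Variables (F : MX -> VY -> R) (Gx : MX -> VY -> MX) (Gy : MX -> VY -> VY).
Variables (C p : R) (Ydom : set VY) (z : MX).
Hypothesis F_grad :
  forall x y, Xball C x -> Ydom y -> is_grad2 F x y (Gx x y) (Gy x y).

Local Notation Fp x y := (F x y + p / 2 * fsq (x - z)).

Lemma is_grad2_segment_derive x0 x1 y t : Xball C x0 -> Xball C x1 -> Ydom y ->
  0 <= t <= 1 ->
  has_derive01 (fun s => F (x0 + s *: (x1 - x0)) y) t
    (mdot (Gx (x0 + t *: (x1 - x0)) y) (x1 - x0)).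
Proof.
move=> x0_in x1_in y_in t01 e e_gt0.
set d := x1 - x0; set xt := x0 + t *: d.
have nd1_gt0 : 0 < fnorm d + 1 by have := fnorm_ge0 d; lra.
have [delta delta_gt0 near_xt] :=
  F_grad (Xball_segment x0_in x1_in t01) y_in (divr_gt0 e_gt0 nd1_gt0).
exists (delta / (fnorm d + 1)) => [|s _]; first exact: divr_gt0.
rewrite ltr_pdivlMr // => st_small.
have fnorm_step : fnorm ((s - t) *: d) = `|s - t| * fnorm d by rewrite fnormZ.
have := near_xt ((s - t) *: d) 0; rewrite fnorm_step fnorm0 addr0 addr0.
have -> : xt + (s - t) *: d = x0 + s *: d.
  by rewrite /xt -addrA -scalerDl addrCA subrr addr0.
have st_ge0 := normr_ge0 (s - t); have nd_ge0 := fnorm_ge0 d.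
rewrite mdot0r subr0 mdotZr (mulrC (mdot _ _)).
move=> /(_ ltac:(nra) delta_gt0) /le_trans; apply.
have -> : e / (fnorm d + 1) * (`|s - t| * fnorm d)
    = e * `|s - t| * (fnorm d / (fnorm d + 1)) by field; lra.
apply: ler_piMr; first by rewrite mulr_ge0 // ltW.
by rewrite ler_pdivrMr // mul1r; lra.
Qed.

Lemma prox_segment_derive x0 x1 y t : Xball C x0 -> Xball C x1 -> Ydom y ->
  0 <= t <= 1 ->
  has_derive01 (fun s => Fp (x0 + s *: (x1 - x0)) y) t
    (mdot (Gx (x0 + t *: (x1 - x0)) y + p *: (x0 + t *: (x1 - x0) - z)) (x1 - x0)).
Proof.
move=> x0_in x1_in y_in t01; set d := x1 - x0.
have sqr_part s : p / 2 * fsq (x0 + s *: d - z)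
    = p / 2 * fsq (x0 - z) + p * mdot (x0 - z) d * s + p / 2 * fsq d * s ^+ 2.
  by rewrite addrAC (fsqD (x0 - z)) fsqZ mdotZr; field.
pose a := p / 2 * fsq (x0 - z); pose b := p * mdot (x0 - z) d; pose c := p / 2 * fsq d.
apply: (eq_has_derive01 (phi := fun s => F (x0 + s *: d) y + (a + b * s + c * s ^+ 2))).
  by move=> s; rewrite sqr_part.
have -> : mdot (Gx (x0 + t *: d) y + p *: (x0 + t *: d - z)) d
    = mdot (Gx (x0 + t *: d) y) d + (b + 2 * c * t).
  by rewrite mdotDl mdotZl addrAC mdotDl mdotZl /b /c /fsq; field.
apply: has_derive01D; last exact: has_derive01_quadratic.
exact: is_grad2_segment_derive.
Qed.

Lemma argmin_prox_first_order x0 x1 y : Ydom y ->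
  is_argmin (Xball C) (fun x => Fp x y) x0 -> Xball C x1 ->
  0 <= mdot (Gx x0 y + p *: (x0 - z)) (x1 - x0).
Proof.
move=> y_in [x0_in x0_min] x1_in.
have t0 : 0 <= (0 : R) <= 1 by rewrite lexx ler01.
have := prox_segment_derive x0_in x1_in y_in t0; rewrite scale0r addr0 => phi_d.
apply: has_derive01_ge0_at_min phi_d _ => t t01; rewrite scale0r addr0.
exact/x0_min/Xball_segment.
Qed.

Lemma argmin_prox_growth l x0 x1 y : Ydom y ->
  (forall xa xb, Xball C xa -> Xball C xb ->
     fnorm (Gx xa y - Gx xb y) <= l * fnorm (xa - xb)) ->
  is_argmin (Xball C) (fun x => Fp x y) x0 -> Xball C x1 ->
  Fp x0 y + (p - l) / 2 * fsq (x1 - x0) <= Fp x1 y.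
Proof.
move=> y_in Gx_lip x0_min x1_in; have x0_in := x0_min.1.
have first_order := argmin_prox_first_order y_in x0_min x1_in.
set d := x1 - x0 in first_order *; pose k := - ((p - l) / 2 * fsq d).
have psi_d t : 0 <= t <= 1 -> has_derive01
    (fun s => Fp (x0 + s *: d) y + (0 + 0 * s + k * s ^+ 2)) t
    (mdot (Gx (x0 + t *: d) y + p *: (x0 + t *: d - z)) d + (0 + 2 * k * t)).
  move=> t01; apply: has_derive01D; last exact: has_derive01_quadratic.
  exact: prox_segment_derive.
(* The derivative is at least (p - l) t |d|^2 by the first-order condition at x0
   and the Lipschitz bound on Gx along the segment *)
have psi_d_ge0 t : 0 <= t <= 1 ->
    0 <= mdot (Gx (x0 + t *: d) y + p *: (x0 + t *: d - z)) d + (0 + 2 * k * t).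
  move=> /[dup] t01 /andP[t_ge0 _].
  have xt_in : Xball C (x0 + t *: d) := Xball_segment x0_in x1_in t01.
  have dist_xt : fnorm (x0 - (x0 + t *: d)) = t * fnorm d.
    by rewrite (fnorm_distC x0) addrAC subrr add0r fnormZ ger0_norm.
  have := Gx_lip _ _ x0_in xt_in; rewrite dist_xt => /(mdot_le_bound d).
  rewrite mdotBl mdotDl mdotZl (addrAC x0) mdotDl mdotZl -/(fsq d) fsq_fnorm /k fsq_fnorm.
  rewrite mdotDl mdotZl in first_order; nra.
have := ger0_has_derive01_le psi_d psi_d_ge0.
have -> : x0 + 1 *: d = x1 by rewrite scale1r addrC subrK.
rewrite scale0r addr0 expr0n expr1n /k /=; lra.
Qed.

Lemma argmin_prox_lipschitz l x0 x1 y0 y1 : 0 <= l -> Ydom y0 -> Ydom y1 ->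
  fnorm (Gx x0 y0 - Gx x1 y1) <= l * fnorm (x0 - x1) + l * fnorm (y0 - y1) ->
  is_argmin (Xball C) (fun x => Fp x y0) x0 ->
  is_argmin (Xball C) (fun x => Fp x y1) x1 ->
  (p - l) * fnorm (x1 - x0) <= l * fnorm (y1 - y0).
Proof.
move=> l_ge0 y0_in y1_in Gx_lip x0_min x1_min.
have fo0 := argmin_prox_first_order y0_in x0_min x1_min.1.
have fo1 := argmin_prox_first_order y1_in x1_min x0_min.1.
rewrite -(opprB x1 x0) mdotNr in fo1; set e := x1 - x0 in fo0 fo1 *.
rewrite (fnorm_distC x0) (fnorm_distC y0) -/e in Gx_lip.
have := mdot_le_bound e Gx_lip.
rewrite mdotBl !mdotDl !mdotZl in fo0 fo1 *.
have shift : mdot (x1 - z) e = mdot (x0 - z) e + fsq e.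
  by rewrite /fsq -mdotDl /e [_ + (x1 - x0)]addrC addrA subrK.
rewrite shift fsq_fnorm in fo1; move=> Gx_step.
have n_ge0 := fnorm_ge0 (y1 - y0).
have : (p - l) * fnorm e * fnorm e <= l * fnorm (y1 - y0) * fnorm e by lra.
have [-> _|e_neq0] := eqVneq (fnorm e) 0; first by rewrite mulr0 mulr_ge0.
by rewrite ler_pM2r // lt_def e_neq0 fnorm_ge0.
Qed.

End ProximalArgmin.

Section Gradients.
Context {R : realType} {d1 r d2 : nat}.
Notation MX := 'M[R]_(d1, r).
Notation VY := 'rV[R]_d2.

Lemma prox_frechet_subgrad (h : VY -> R) Ydom tau v yp : 0 < tau ->
  is_prox h Ydom tau v yp -> frechet_subgrad h Ydom yp (tau^-1 *: (v - yp)).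
Proof.
move=> tau_gt0 [yp_in yp_min]; split => // e e_gt0.
exists (2 * tau * e) => [|y y_in near_yp]; first by rewrite !mulr_gt0.
have /= := yp_min y y_in.
have -> : y - v = (y - yp) - (v - yp) by rewrite opprB addrA subrK.
rewrite (fsq_distC yp) (fsqD (y - yp)) mdotNr fsqN (fsq_fnorm (y - yp)) => yp_le.
rewrite -(ler_pM2l tau_gt0) mdotZl (mdotC (v - yp)).
rewrite mulrBr mulrDr mulrA mulfV ?gt_eqF // mul1r.
have := fnorm_ge0 (y - yp); nra.
Qed.

Lemma is_grad2_y_unique (F1 F2 : MX -> VY -> R) x1 x2 y gx1 gy1 gx2 gy2 :
  (forall hy, F1 x1 (y + hy) - F1 x1 y = F2 x2 (y + hy) - F2 x2 y) ->
  is_grad2 F1 x1 y gx1 gy1 -> is_grad2 F2 x2 y gx2 gy2 -> gy1 = gy2.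
Proof.
move=> same_incr F1_grad F2_grad; apply/eqP; rewrite -subr_eq0; apply/eqP.
set D := gy1 - gy2; have N_ge0 := fnorm_ge0 D.
suff : fnorm D <= 0 by move=> N_le0; apply: fsq_eq0; rewrite fsq_fnorm; nra.
apply/ler_addgt0Pr => e e_gt0; rewrite add0r.
have [delta1 delta1_gt0 near1] := F1_grad (e / 2) ltac:(lra).
have [delta2 delta2_gt0 near2] := F2_grad (e / 2) ltac:(lra).
pose delta := Num.min delta1 delta2.
have delta_gt0 : 0 < delta by rewrite lt_min delta1_gt0.
pose s := delta / (2 * (fnorm D + 1)).
have s_gt0 : 0 < s by rewrite divr_gt0 //; lra.
have hy_small : fnorm (s *: D) < delta.
  have s_scale : s * (2 * (fnorm D + 1)) = delta by rewrite /s; field; lra.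
  rewrite fnormZ gtr0_norm //; nra.
have [/(lt_le_trans hy_small) hy_lt1 /(lt_le_trans hy_small) hy_lt2] :
  delta <= delta1 /\ delta <= delta2 by rewrite !ge_min !lexx orbT.
have := near1 0 (s *: D); have := near2 0 (s *: D).
rewrite !addr0 !mdot0r !subr0 fnorm0 !add0r same_incr.
move=> /(_ delta2_gt0 hy_lt2) /ler_normlP[_ incr2].
move=> /(_ delta1_gt0 hy_lt1) /ler_normlP[incr1 _].
rewrite fnormZ gtr0_norm // in incr1 incr2.
have : s * (fnorm D * fnorm D) <= e * (s * fnorm D).
  by rewrite -fsq_fnorm /fsq -mdotZr {1}/D mdotBl; lra.
have [-> _|N_neq0] := eqVneq (fnorm D) 0; first exact: ltW.
have N_gt0 : 0 < fnorm D by rewrite lt_def N_neq0.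
by move=> sq_le; rewrite -(ler_pM2l (mulr_gt0 s_gt0 N_gt0)); lra.
Qed.

Lemma ftilde_grad_y (f : MX -> VY -> R) rho x y gx gy gx' gy' :
  is_grad2 (ftilde f rho) x y gx gy -> is_grad2 f (Amap x) y gx' gy' -> gy = gy'.
Proof. by apply: is_grad2_y_unique => hy; rewrite /ftilde; ring. Qed.

Lemma fsq_prox_residual_le tau b c (y0 y1 g0 g1 : VY) : 0 < tau ->
  fnorm (g0 - g1) <= b + c ->
  fsq (- g1 + tau^-1 *: (y0 + tau *: g0 - y1))
    <= 3 * ((tau^-1 * fnorm (y1 - y0)) ^+ 2 + b ^+ 2 + c ^+ 2).
Proof.
move=> tau_gt0 g_le.
have -> : - g1 + tau^-1 *: (y0 + tau *: g0 - y1) = tau^-1 *: (y0 - y1) + (g0 - g1).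
  by apply/matrixP => i j; rewrite !mxE; field; lra.
have norm_le :
    fnorm (tau^-1 *: (y0 - y1) + (g0 - g1)) <= tau^-1 * fnorm (y1 - y0) + b + c.
  apply: le_trans (ler_fnormD _ _) _.
  by rewrite fnormZ gtr0_norm ?invr_gt0 // (fnorm_distC y0) -addrA lerD2l.
apply: le_trans (sqrD3_le _ _ _); rewrite fsq_fnorm -expr2 lerXn2r ?nnegrE ?fnorm_ge0 //.
exact: le_trans (fnorm_ge0 _) norm_le.
Qed.

End Gradients.

Section MaxFunction.
Context {R : realType} {d1 r d2 : nat}.
Notation MX := 'M[R]_(d1, r).
Notation VY := 'rV[R]_d2.
Variables (f : MX -> VY -> R) (fy : MX -> VY -> VY) (h : VY -> R) (Ydom : set VY).
Variables (C mu rho p : R) (z : MX).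
Hypothesis A3 : assumption_A3 f fy h Ydom C mu.

Lemma fhat_le_A3 x y w v : Xball C x -> Ydom y -> Ydom w ->
  frechet_subgrad h Ydom y v ->
  fhat f rho p x w z - h w
    <= fhat f rho p x y z - h y + 1 / (2 * mu) * fsq (- fy (Amap x) y + v).
Proof.
move=> x_in y_in w_in v_sub; have Ax_in : Xbar C (Amap x) by exists x.
by have := A3.2 _ _ _ _ Ax_in y_in w_in v_sub; rewrite /fhat /ftilde; lra.
Qed.

Lemma Phi_le x y v : Xball C x -> Ydom y -> frechet_subgrad h Ydom y v ->
  Phi f h Ydom rho p x z
    <= fhat f rho p x y z - h y + 1 / (2 * mu) * fsq (- fy (Amap x) y + v).
Proof.
move=> x_in y_in v_sub; apply: ge_sup; first by exists (fhat f rho p x y z - h y), y.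
by move=> _ [w w_in <-]; exact: fhat_le_A3.
Qed.

Lemma fhat_le_Phi x y v : Xball C x -> Ydom y -> frechet_subgrad h Ydom y v ->
  fhat f rho p x y z - h y <= Phi f h Ydom rho p x z.
Proof.
move=> x_in y_in v_sub; apply: sup_upper_bound; last by exists y.
split; first by exists (fhat f rho p x y z - h y), y.
by eexists => _ [w w_in <-]; exact: (fhat_le_A3 x_in y_in w_in v_sub).
Qed.

Lemma argmin_Phi_dist x1 x2 y v c : Xball C x1 -> Ydom y ->
  frechet_subgrad h Ydom y v ->
  is_argmin (Xball C) (fun x => Phi f h Ydom rho p x z) x2 ->
  fhat f rho p x1 y z + c / 2 * fsq (x2 - x1) <= fhat f rho p x2 y z ->
  mu * c * fsq (x2 - x1) <= fsq (- fy (Amap x1) y + v).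
Proof.
move=> x1_in y_in v_sub [x2_in x2_min] growth; have [mu_gt0 _] := A3.
have := Phi_le x1_in y_in v_sub; have := fhat_le_Phi x2_in y_in v_sub.
have := x2_min _ x1_in => Phi12 Phi2 Phi1.
set D := fsq (x2 - x1) in growth *; set W := fsq (- fy (Amap x1) y + v) in Phi1 *.
have gap : c / 2 * D <= 1 / (2 * mu) * W by lra.
have -> : mu * c * D = 2 * mu * (c / 2 * D) by field.
have -> : W = 2 * mu * (1 / (2 * mu) * W) by field; lra.
by rewrite ler_pM2l ?mulr_gt0.
Qed.

End MaxFunction.

Theorem lemma9 (R : realType) (d1 r d2 : nat)
  (f : 'M[R]_(d1, r) -> 'rV[R]_d2 -> R)
  (fx : 'M[R]_(d1, r) -> 'rV[R]_d2 -> 'M[R]_(d1, r))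
  (fy : 'M[R]_(d1, r) -> 'rV[R]_d2 -> 'rV[R]_d2)
  (U : set ('M[R]_(d1, r) * 'rV[R]_d2))
  (h : 'rV[R]_d2 -> R) (Ydom : set 'rV[R]_d2)
  (zeta Lxx Lxy Lyx Lyy mu C rho l p tau2 : R)
  (Gx : 'M[R]_(d1, r) -> 'rV[R]_d2 -> 'M[R]_(d1, r))
  (Gy : 'M[R]_(d1, r) -> 'rV[R]_d2 -> 'rV[R]_d2)
  (yt : 'rV[R]_d2) (zt : 'M[R]_(d1, r))
  (xa : 'M[R]_(d1, r)) (yplus : 'rV[R]_d2) (xs1 xs2 : 'M[R]_(d1, r)) :
  assumption_A1 h Ydom zeta ->
  assumption_A2 f fx fy U Ydom C Lxx Lxy Lyx Lyy ->
  assumption_A3 f fy h Ydom C mu ->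
  (forall x : 'M[R]_(d1, r), stiefel x -> 1 / 2 + fnorm x < C) ->
  0 < rho ->
  (* (Gx, Gy) is the gradient of tilde f on X x Y *)
  (forall x y, Xball C x -> Ydom y -> is_grad2 (ftilde f rho) x y (Gx x y) (Gy x y)) ->
  (* l is a (blockwise) Lipschitz constant of grad tilde f on X x Y *)
  0 <= l ->
  (forall x1 y1 x2 y2, Xball C x1 -> Ydom y1 -> Xball C x2 -> Ydom y2 ->
     fnorm (Gx x1 y1 - Gx x2 y2) <= l * fnorm (x1 - x2) + l * fnorm (y1 - y2)) ->
  (forall x1 y1 x2 y2, Xball C x1 -> Ydom y1 -> Xball C x2 -> Ydom y2 ->
     fnorm (Gy x1 y1 - Gy x2 y2) <= l * fnorm (x1 - x2) + l * fnorm (y1 - y2)) ->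
  l < p ->
  0 < tau2 -> tau2 * zeta < 1 ->
  Ydom yt ->
  (* xa = x*(y_t, z_t) *)
  is_argmin (Xball C) (fun x => fhat f rho p x yt zt) xa ->
  (* yplus = y^+(z_t) = prox_{tau2 h}(y_t + tau2 grad_y tilde f(x*(y_t,z_t), y_t)) *)
  is_prox h Ydom tau2 (yt + tau2 *: Gy xa yt) yplus ->
  (* xs1 = x*(y^+(z_t), z_t) *)
  is_argmin (Xball C) (fun x => fhat f rho p x yplus zt) xs1 ->
  (* xs2 = x*(z_t) *)
  is_argmin (Xball C) (fun x => Phi f h Ydom rho p x zt) xs2 ->
  let gamma2 := (p + l) / (p - l) in
  fsq (xs1 - xs2) <=
    3 / (mu * (p - l) * tau2 ^+ 2)
      * (1 + tau2 ^+ 2 * l ^+ 2 + gamma2 ^+ 2 * tau2 ^+ 2 * l ^+ 2)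
      * fsq (yplus - yt).
Proof.
move=> _ [_ U_Xbar f_grad _ _] A3 _ _ Ft_grad l_ge0 Gx_lip Gy_lip l_lt_p tau_gt0 _
  yt_in xa_min prox xs1_min xs2_min; cbv zeta; set gamma2 := (p + l) / (p - l).
have [mu_gt0 _] := A3; have pl_gt0 : 0 < p - l by lra.
have yplus_in := prox.1; have xs1_in := xs1_min.1; have xa_in := xa_min.1.
have v_sub := prox_frechet_subgrad tau_gt0 prox.
have Gy_xs1 : Gy xs1 yplus = fy (Amap xs1) yplus.
  apply: ftilde_grad_y (Ft_grad _ _ xs1_in yplus_in) (f_grad _ _ _).
  by apply: U_Xbar yplus_in; exists xs1.
have Gx_lip_yplus xa' xb' : Xball C xa' -> Xball C xb' ->
    fnorm (Gx xa' yplus - Gx xb' yplus) <= l * fnorm (xa' - xb').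
  move=> xa'_in xb'_in; have := Gx_lip _ _ _ _ xa'_in yplus_in xb'_in yplus_in.
  by rewrite subrr fnorm0 mulr0 addr0.
have growth := argmin_prox_growth Ft_grad yplus_in Gx_lip_yplus xs1_min xs2_min.1.
have dist := argmin_Phi_dist A3 xs1_in yplus_in v_sub xs2_min growth.
have lip := argmin_prox_lipschitz Ft_grad l_ge0 yt_in yplus_in
  (Gx_lip _ _ _ _ xa_in yt_in xs1_in yplus_in) xa_min xs1_min.
set n := fnorm (yplus - yt) in lip *; have n_ge0 : 0 <= n := fnorm_ge0 _.
have xa_near : fnorm (xa - xs1) <= gamma2 * n.
  by rewrite fnorm_distC /gamma2 mulrAC ler_pdivlMr //; nra.
have Gy_le : fnorm (Gy xa yt - Gy xs1 yplus) <= l * n + gamma2 * l * n.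
  have := Gy_lip _ _ _ _ xa_in yt_in xs1_in yplus_in.
  by rewrite (fnorm_distC yt) -/n; nra.
have := fsq_prox_residual_le yt yplus tau_gt0 Gy_le; rewrite Gy_xs1 -/n => residual_le.
rewrite fsq_distC (fsq_fnorm (yplus - yt)) -/n -(ler_pM2l (mulr_gt0 mu_gt0 pl_gt0)).
apply: le_trans dist (le_trans residual_le _).
by rewrite le_eqVlt; apply/orP; left; apply/eqP; field; lra.
Qed.
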